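(* Let $A$ and $B$ be disjoint cubic graphs with $v(A)\equiv 0\pmod 6$ and $v(B)\equiv 4\pmod 6$, let $a=a_1a_2\in E(A)$, $x\in V(B)$, and $b=b_1b_2\in E(B)$. Suppose $A$ has no $\Lambda$-factor containing $a$, and $B-x$ has no $\Lambda$-factor avoiding $b$ (so $x$ is not incident to $b$). Let $G=AabB$. Then $v(G)\equiv 4\pmod 6$ and $G-x$ has no $\Lambda$-factor.
   Context: Graphs are finite, undirected, without loops or multiple edges; $v(G)=|V(G)|$. For disjoint graphs $A,B$ with $a=a_1a_2\in E(A)$, $b=b_1b_2\in E(B)$, $AabB$ is obtained from $(A-a)\cup(B-b)$ (edge deletions) by adding the new edges $a_1b_1$ and $a_2b_2$. $G-x$ denotes deletion of the vertex $x$. A $\Lambda$-factor of a graph is a spanning subgraph each of whose components is a path on 3 vertices; it avoids an edge $e$ if $e$ is not one of its edges. *)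

From mathcomp Require Import all_boot.
Set Implicit Arguments. Unset Strict Implicit. Unset Printing Implicit Defensive.

Definition simple_graph (T : finType) (e : rel T) : Prop :=
  symmetric e /\ irreflexive e.

Definition cubic (T : finType) (e : rel T) : Prop :=
  forall v : T, #|[set w | e v w]| = 3.

(* F is a Lambda-factor of the graph (S, e) (the subgraph of e induced on the
   vertex set S): F is a (symmetric) set of edges of G[S], spanning S, such that
   every component of (S, F) is a path u - w - z on 3 vertices. *)
Definition is_Lambda_factor (T : finType) (e : rel T) (S : {set T}) (F : rel T) : Prop :=
  symmetric F /\
  (forall u v, F u v -> [&& e u v, u \in S & v \in S]) /\
  (forall v, v \in S ->
     exists u w z, [/\ [&& u != w, w != z & u != z],
                       [set y | connect F v y] = [set u; w; z],
                       F u w, F w z & ~~ F u z]).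

Definition join_graph (TA TB : finType) (eA : rel TA) (eB : rel TB)
  (a1 a2 : TA) (b1 b2 : TB) : rel (TA + TB) :=
  fun u v =>
    match u, v with
    | inl x, inl y => eA x y && ~~ (((x == a1) && (y == a2)) || ((x == a2) && (y == a1)))
    | inr x, inr y => eB x y && ~~ (((x == b1) && (y == b2)) || ((x == b2) && (y == b1)))
    | inl x, inr y => ((x == a1) && (y == b1)) || ((x == a2) && (y == b2))
    | inr y, inl x => ((x == a1) && (y == b1)) || ((x == a2) && (y == b2))
    end.

From mathcomp Require Import all_boot zify.
Set Implicit Arguments. Unset Strict Implicit. Unset Printing Implicit Defensive.

(* Let F be a Lambda-factor of G - x. If F uses neither cross edge a1b1, a2b2, its
   restriction to B is a Lambda-factor of B - x avoiding b. Otherwise, as 3 divides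
   v(A), the components of F meeting A but no cross edge cover a multiple of 3 vertices
   of A, hence so do the (one or two) components through cross edges. Each of these has
   one or two vertices in A, and both cross edges cannot lie in one 3-vertex component;
   so both are used, by components a'-a1-b1 and a2-b2-_ (up to symmetry). Replacing the
   cross edges by a1a2 turns the restriction of F to A into a Lambda-factor of A
   containing a. *)

Definition component (T : finType) (F : rel T) (v : T) := [set y | connect F v y].

(* [u - w - z] is a whole component of [F]: no further [F]-edges leave it. *)
Definition path3 (T : finType) (F : rel T) (u w z : T) :=
  [/\ [&& u != w, w != z & u != z], F u w, F w z, ~~ F u z &
   forall y, [/\ F u y -> y = w, F w y -> y = u \/ y = z & F z y -> y = w]].

Section Components.
Variables (T : finType) (F : rel T).

Lemma component_refl v : v \in component F v.
Proof. by rewrite inE connect0. Qed.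

Lemma component_edge v y : F v y -> y \in component F v.
Proof. by rewrite inE => /connect1. Qed.

Lemma mem_set3 (u w z : T) :
  [/\ u \in [set u; w; z], w \in [set u; w; z] & z \in [set u; w; z]].
Proof. by rewrite !inE !eqxx !orbT. Qed.

Hypothesis Fsym : symmetric F.

Lemma component_eq v y : y \in component F v -> component F y = component F v.
Proof.
rewrite inE => cvy; apply/setP=> t; rewrite !inE.
by rewrite (same_connect (sym_connect_sym Fsym) cvy).
Qed.

Lemma path3_component v u w z : irreflexive F ->
  [&& u != w, w != z & u != z] -> component F v = [set u; w; z] ->
  F u w -> F w z -> ~~ F u z -> path3 F u w z.
Proof.
move=> Firr d C Fuw Fwz nFuz; split=> // y.
have [Hu Hw Hz] := mem_set3 u w z.
have nb t : t \in [set u; w; z] -> F t y -> [|| y == u, y == w | y == z].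
  by rewrite orbA -!in_set1 -!in_setU -C !inE => ct Fty; exact: connect_trans ct (connect1 Fty).
split.
- move=> /[dup] Fuy /(nb _ Hu) /or3P[] /eqP E //; subst y.
    by rewrite Firr in Fuy.
  by rewrite Fuy in nFuz.
- by move=> /[dup] Fwy /(nb _ Hw) /or3P[] /eqP E; [left|rewrite E Firr in Fwy|right].
- move=> /[dup] Fzy /(nb _ Hz) /or3P[] /eqP E //; subst y.
    by rewrite Fsym Fzy in nFuz.
  by rewrite Firr in Fzy.
Qed.

Lemma component_path3 u w z v : path3 F u w z -> v \in [set u; w; z] ->
  component F v = [set u; w; z].
Proof.
move=> [_ Fuw Fwz _ N] vin.
have [Hu Hw Hz] := mem_set3 u w z.
have cl : closed F [set u; w; z].
  apply: intro_closed => [|a b Fab]; first exact: sym_connect_sym.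
  rewrite !inE -orbA.
  case/or3P=> /eqP E; subst a; have [Nu Nw Nz] := N b.
  - by rewrite (Nu Fab) eqxx orbT.
  - by case: (Nw Fab) => ->; rewrite eqxx ?orbT.
  - by rewrite (Nz Fab) eqxx orbT.
have cw t : t \in [set u; w; z] -> connect F w t.
  rewrite !inE -orbA => /or3P[] /eqP->; first by apply: connect1; rewrite Fsym.
    exact: connect0.
  exact: connect1.
apply/setP=> y; rewrite inE; apply/idP/idP => [cvy|yin].
  by rewrite -(closed_connect cl cvy).
by apply: connect_trans (cw _ yin); rewrite (sym_connect_sym Fsym); exact: cw.
Qed.

Lemma dvdn3_card_closed (D : {set T}) :
  (forall y, y \in D -> #|[set t in D | connect F y t]| = 3) -> 3 %| #|D|.
Proof.
move=> H; have csym := sym_connect_sym Fsym.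
have eqR : {in D & &, equivalence_rel (connect F)}.
  move=> a b c _ _ _; split=> [|cab]; first exact: connect0.
  apply/idP/idP => h; last exact: connect_trans cab h.
  by apply: connect_trans h; rewrite csym.
rewrite (card_partition (equivalence_partitionP eqR)).
rewrite (eq_bigr (fun _ => 3)); last by move=> A /imsetP[y Dy ->]; exact: H.
by rewrite sum_nat_const dvdn_mull.
Qed.

End Components.

Lemma lambda_factor_of_path3 (T : finType) (e : rel T) (S : {set T}) (F : rel T) :
  symmetric F -> (forall u v, F u v -> [&& e u v, u \in S & v \in S]) ->
  (forall v, v \in S -> exists u w z, path3 F u w z /\ v \in [set u; w; z]) ->
  is_Lambda_factor e S F.
Proof.
move=> Fsym Fe H; do 2!split=> //; move=> v /H [u [w [z [P vin]]]].
exists u, w, z; have := component_path3 Fsym P vin.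
by case: P => d Fuw Fwz nFuz _ C.
Qed.

Lemma path3_inj (T1 T2 : finType) (f : T1 -> T2) (G : rel T1) (F : rel T2) u w z :
  injective f -> (forall t y, t \in [:: u; w; z] -> G t y = F (f t) (f y)) ->
  path3 F (f u) (f w) (f z) -> path3 G u w z.
Proof.
move=> finj H [d Fuw Fwz nFuz N].
have Hu : u \in [:: u; w; z] by rewrite !inE eqxx.
have Hw : w \in [:: u; w; z] by rewrite !inE eqxx orbT.
have Hz : z \in [:: u; w; z] by rewrite !inE eqxx !orbT.
rewrite !(inj_eq finj) in d; split; rewrite ?H //.
move=> y; have [Nu Nw Nz] := N (f y); split; rewrite H // => h.
- exact/finj/Nu.
- by case: (Nw h) => /finj; auto.
- exact/finj/Nz.
Qed.

Lemma path3_pullback (T1 T2 : finType) (f : T1 -> T2) (G : rel T1) (F : rel T2) v u w z :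
  injective f -> path3 F u w z -> component F (f v) = [set u; w; z] ->
  {subset component F (f v) <= codom f} ->
  (forall t y, f t \in component F (f v) -> G t y = F (f t) (f y)) ->
  exists u' w' z', path3 G u' w' z' /\ v \in [set u'; w'; z'].
Proof.
move=> finj P C Cf GF; have [Hu Hw Hz] := mem_set3 u w z.
rewrite C in Cf GF.
have /codomP[u' Eu] := Cf _ Hu; have /codomP[w' Ew] := Cf _ Hw.
have /codomP[z' Ez] := Cf _ Hz; subst u w z.
exists u', w', z'; split.
  apply: path3_inj P => // t y; rewrite !inE => tin; apply: GF.
  by rewrite !inE !(inj_eq finj) -orbA.
by have := component_refl F (f v); rewrite C !inE !(inj_eq finj).
Qed.

Lemma connect_cross (T : finType) (F : rel T) (P : pred T) u v :
  connect F u v -> P u -> ~~ P v ->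
  exists t1 t2, [/\ F t1 t2, P t1, ~~ P t2 & connect F u t1].
Proof.
move=> /connectP[p + ->]; elim: p u => [|y p IH] u /=; first by move=> _ ->.
case/andP=> Fuy pth Pu nPv; case: (boolP (P y)) => Py.
  have [t1 [t2 [Ft PT nPT ct]]] := IH y pth Py nPv.
  by exists t1, t2; split=> //; exact: connect_trans (connect1 Fuy) ct.
by exists u, y; split=> //; exact: connect0.
Qed.

Section LambdaFactor.
Variables (T : finType) (e : rel T) (S : {set T}) (F : rel T).
Hypothesis eirr : irreflexive e.
Hypothesis FL : is_Lambda_factor e S F.

Lemma lambda_factor_sym : symmetric F. Proof. by case: FL. Qed.

Lemma lambda_factor_sub u v : F u v -> [&& e u v, u \in S & v \in S].
Proof. by case: FL => _ [H _]; apply: H. Qed.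

Lemma lambda_factor_irr : irreflexive F.
Proof. by move=> t; apply/negP => /lambda_factor_sub; rewrite eirr. Qed.

Lemma lambda_factor_path3 v : v \in S ->
  exists u w z, path3 F u w z /\ component F v = [set u; w; z].
Proof.
case: FL => Fsym [_ H] /H [u [w [z [d C Fuw Fwz nFuz]]]].
by exists u, w, z; split=> //; apply: (path3_component Fsym lambda_factor_irr d C).
Qed.

Lemma card_component v : v \in S -> #|component F v| = 3.
Proof.
move=> /lambda_factor_path3 [u [w [z [[/and3P[d1 d2 d3] _ _ _ _] ->]]]].
by rewrite -setUA cardsU1 cards2 !inE d2 negb_or d1 d3.
Qed.

Lemma lambda_factor_neighbor v : v \in S -> exists t, F v t.
Proof.
move=> /lambda_factor_path3 [u [w [z [[_ Fuw Fwz _ _] C]]]].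
have := component_refl F v; rewrite C !inE -orbA => /or3P[] /eqP->.
- by exists w.
- by exists u; rewrite lambda_factor_sym.
- by exists w; rewrite lambda_factor_sym.
Qed.

End LambdaFactor.

Definition is_inl (A B : Type) (y : A + B) := if y is inl _ then true else false.

Lemma card_lefts (TA TB : finType) : #|[set y : TA + TB | is_inl y]| = #|TA|.
Proof.
have -> : [set y : TA + TB | is_inl y] = inl @: [set: TA].
  apply/setP=> [[p|q]]; rewrite !inE /=; first by apply/esym/imsetP; exists p.
  by apply/esym/imsetP => [[]].
by rewrite card_imset ?cardsT //; apply: inl_inj.
Qed.

Section JoinFactor.
Variables (TA TB : finType) (a1 a2 : TA) (b1 b2 : TB) (x : TB) (e : rel (TA + TB)).
Hypothesis eirr : irreflexive e.
Hypothesis e_cross : forall p q, e (inl p) (inr q) ->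
  ((p == a1) && (q == b1)) || ((p == a2) && (q == b2)).
Hypotheses (a12 : a1 != a2) (b12 : b1 != b2).
Variable F : rel (TA + TB).
Hypothesis FL : is_Lambda_factor e [set~ inr x] F.

Local Notation S := [set~ (inr x : TA + TB)].
Local Notation lefts := [set y : TA + TB | is_inl y].
Local Notation left_part v := (lefts :&: component F v).
Local Notation Fsym := (lambda_factor_sym FL).
Local Notation Firr := (lambda_factor_irr eirr FL).

Lemma inl_in_domain p : (inl p : TA + TB) \in S. Proof. by rewrite !inE. Qed.

Lemma lefts_sub_domain y : y \in lefts -> y \in S.
Proof. by case: y => [p _|q]; [exact: inl_in_domain | rewrite inE]. Qed.

Definition cross1 := F (inl a1) (inr b1).
Definition cross2 := F (inl a2) (inr b2).

Lemma factor_cross t1 t2 : F t1 t2 -> is_inl t1 -> ~~ is_inl t2 ->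
  (cross1 && (t1 == inl a1)) || (cross2 && (t1 == inl a2)).
Proof.
case: t1 t2 => [p|//] [//|q] Ft _ _.
have /and3P[/e_cross] := lambda_factor_sub FL Ft.
by case/orP=> /andP[/eqP ep /eqP eq] _ _; subst; rewrite /cross1 /cross2 Ft eqxx ?orbT.
Qed.

Definition crossed :=
  [set y | (cross1 && connect F (inl a1) y) || (cross2 && connect F (inl a2) y)].

Lemma crossed_connect t y : connect F t y -> (t \in crossed) = (y \in crossed).
Proof. by move=> cty; rewrite !inE !(same_connect_r (sym_connect_sym Fsym) cty). Qed.

Lemma uncrossed_left_closed y t : y \in lefts :\: crossed -> connect F y t ->
  t \in lefts :\: crossed.
Proof.
move=> /setDP[yL yM] cyt; apply/setDP; split; last by rewrite -(crossed_connect cyt).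
apply: contraT; rewrite !inE in yL * => tR.
have [t1 [t2 [Ft Lt1 Rt2 cyt1]]] := connect_cross cyt yL tR.
move: yM; rewrite (crossed_connect cyt1) inE (sym_connect_sym Fsym).
by case/orP: (factor_cross Ft Lt1 Rt2) => /andP[-> /eqP->]; rewrite connect0 ?orbT.
Qed.

Lemma dvdn3_uncrossed_left : 3 %| #|lefts :\: crossed|.
Proof.
apply: (dvdn3_card_closed Fsym) => y yD.
have -> : [set t in lefts :\: crossed | connect F y t] = component F y.
  apply/setP=> t; rewrite inE [in RHS]inE; apply/andb_idl.
  exact: uncrossed_left_closed.
by apply: (card_component eirr FL); apply: lefts_sub_domain; case/setDP: yD.
Qed.

Lemma card_left_crossed_component p q : F (inl p) (inr q) ->
  0 < #|left_part (inl p)| < 3.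
Proof.
move=> Fpq; rewrite -(card_component eirr FL (inl_in_domain p)); apply/andP; split.
  by apply/card_gt0P; exists (inl p); rewrite !inE connect0.
apply: proper_card; rewrite properE subsetIr /=.
by apply/subsetP => /(_ (inr q)); rewrite !inE connect1 // => /(_ isT).
Qed.

Lemma crossed_components_disjoint : cross1 -> cross2 ->
  inl a2 \notin component F (inl a1).
Proof.
move=> c1 c2; apply/negP => a2C.
have C2 := component_eq Fsym a2C.
have b1C : inr b1 \in component F (inl a1) := component_edge c1.
have b2C : inr b2 \in component F (inl a1) by rewrite -C2; exact: component_edge c2.
have := cardsID lefts (component F (inl a1)).
rewrite (card_component eirr FL (inl_in_domain a1)).
have sL : [set (inl a1 : TA + TB); inl a2] \subset component F (inl a1) :&: lefts.
  apply/subsetP => t; rewrite !inE => /orP[]/eqP->; rewrite /= ?connect0 // andbT.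
  by rewrite inE in a2C.
have sR : [set (inr b1 : TA + TB); inr b2] \subset component F (inl a1) :\: lefts.
  by apply/subsetP => t; rewrite !inE => /orP[]/eqP->; rewrite /= -inE.
have := subset_leq_card sL; have := subset_leq_card sR.
rewrite !cards2 !(inj_eq (@inl_inj _ _)) !(inj_eq (@inr_inj _ _)) a12 b12 /=; lia.
Qed.

Lemma dvdn3_crossed_left : 3 %| #|TA| -> 3 %| #|lefts :&: crossed|.
Proof. by move=> h3; rewrite -(dvdn_addl _ dvdn3_uncrossed_left) cardsID card_lefts. Qed.

Lemma crossing_cases : 3 %| #|TA| ->
  [\/ ~~ cross1 /\ ~~ cross2,
      [/\ cross1, cross2, #|left_part (inl a1)| = 2 & #|left_part (inl a2)| = 1]
    | [/\ cross1, cross2, #|left_part (inl a1)| = 1 & #|left_part (inl a2)| = 2]].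
Proof.
move=> /dvdn3_crossed_left.
have n1 := @card_left_crossed_component a1 b1; have n2 := @card_left_crossed_component a2 b2.
case: (boolP cross1) => c1; case: (boolP cross2) => c2; last by constructor 1.
- have -> : lefts :&: crossed = left_part (inl a1) :|: left_part (inl a2).
    by apply/setP=> t; rewrite !inE c1 c2 andb_orr.
  rewrite cardsU.
  have -> : left_part (inl a1) :&: left_part (inl a2) = set0.
    apply/setP=> t; rewrite !inE; apply/negP => /andP[/andP[_ C1] /andP[_ C2]].
    have Et1 : component F t = component F (inl a1) by apply: (component_eq Fsym); rewrite inE.
    have Et2 : component F t = component F (inl a2) by apply: (component_eq Fsym); rewrite inE.
    by move: (crossed_components_disjoint c1 c2); rewrite -Et1 Et2 component_refl.
  rewrite cards0 subn0; move: (n1 c1) (n2 c2).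
  move: #|left_part (inl a1)| #|left_part (inl a2)| => m n hm hn hmn.
  have [[-> ->]|[-> ->]] : (m = 2 /\ n = 1) \/ (m = 1 /\ n = 2) by lia.
    by constructor 2.
  by constructor 3.
- have -> : lefts :&: crossed = left_part (inl a1).
    by apply/setP=> t; rewrite !inE c1 (negbTE c2) orbF.
  by move=> h; exfalso; move: h (n1 c1); lia.
- have -> : lefts :&: crossed = left_part (inl a2).
    by apply/setP=> t; rewrite !inE c2 (negbTE c1).
  by move=> h; exfalso; move: h (n2 c2); lia.
Qed.

Lemma codom_inr (y : TA + TB) : ~~ is_inl y -> y \in codom inr.
Proof. by case: y => // q _; apply: codom_f. Qed.

Lemma codom_inl (y : TA + TB) : is_inl y -> y \in codom inl.
Proof. by case: y => // p _; apply: codom_f. Qed.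

Lemma right_factor_of_uncrossed (eB : rel TB) :
  (forall p q, e (inr p) (inr q) -> eB p q) -> ~~ e (inr b1) (inr b2) -> ~~ cross1 -> ~~ cross2 ->
  exists FB, is_Lambda_factor eB [set~ x] FB /\ ~~ FB b1 b2.
Proof.
move=> e_right e_b12 c1 c2.
have side t y : F t y -> is_inl t = is_inl y.
  have stay t' y' : F t' y' -> is_inl t' -> is_inl y'.
    move=> Fty Lt; apply: contraT => Ry.
    by case/orP: (factor_cross Fty Lt Ry) => /andP[c _]; rewrite c in c1 c2.
  by move=> Fty; apply/idP/idP; apply: stay; rewrite // Fsym.
have cl : closed F (@is_inl TA TB) by move=> t y /side.
exists (fun p q => F (inr p) (inr q)); split; last first.
  by apply/negP => /(lambda_factor_sub FL) /and3P[e12]; move: e_b12; rewrite e12.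
apply: lambda_factor_of_path3 => [p q|p q|v vx]; first exact: Fsym.
  case/(lambda_factor_sub FL)/and3P => /e_right-> p' q'.
  by rewrite !inE !(inj_eq (@inr_inj TA TB)) in p' q' *; rewrite p' q'.
have vS : (inr v : TA + TB) \in S by rewrite !inE (inj_eq (@inr_inj _ _)); rewrite !inE in vx.
have [u [w [z [P C]]]] := lambda_factor_path3 eirr FL vS.
apply: (path3_pullback (@inr_inj TA TB) P C) => // t.
by rewrite inE => /(closed_connect cl) /esym /negbT /codom_inr.
Qed.

Lemma crossed_component_pair : cross1 -> cross2 -> #|left_part (inl a1)| = 2 ->
  exists a', [/\ a' != a1, a' != a2, F (inl a') (inl a1) &
    forall y, (inl y \in component F (inl a1)) = (y == a1) || (y == a')].
Proof.
move=> c1 c2 n1.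
have a1in : inl a1 \in left_part (inl a1) by rewrite !inE connect0.
have /cards1P[t Et] : #|left_part (inl a1) :\ inl a1| == 1.
  by move: n1; rewrite (cardsD1 (inl a1)) a1in; lia.
have /setD1P[ta1 /setIP[tL a'C]] : t \in left_part (inl a1) :\ inl a1.
  by rewrite Et set11.
rewrite inE in tL; have /codomP[a' Ea'] := codom_inl tL; subst t.
rewrite (inj_eq (@inl_inj _ _)) in ta1.
have C1 y : (inl y \in component F (inl a1)) = (y == a1) || (y == a').
  case: (eqVneq y a1) => [->|ya1]; first exact: component_refl.
  have := in_setD1 (inl y) (left_part (inl a1)) (inl a1).
  by rewrite Et !inE !(inj_eq (@inl_inj _ _)) ya1 => ->.
have a'a2 : a' != a2.
  by apply: contraNneq (crossed_components_disjoint c1 c2) => <-.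
exists a'; split=> //.
have [t Ft] := lambda_factor_neighbor eirr FL (inl_in_domain a').
have := component_edge Ft; rewrite (component_eq Fsym a'C).
case: t Ft => [y|q] Ft.
  by rewrite C1 => /orP[]/eqP E; subst y; rewrite ?Firr in Ft.
move=> _; have := factor_cross Ft isT isT.
by rewrite !(inj_eq (@inl_inj _ _)) (negbTE ta1) (negbTE a'a2) !andbF.
Qed.

Lemma crossed_component_single : #|left_part (inl a2)| = 1 ->
  forall y, (inl y \in component F (inl a2)) = (y == a2).
Proof.
move=> /eqP/cards1P[t Et] y.
have : inl a2 \in left_part (inl a2) by rewrite !inE connect0.
rewrite Et inE => /eqP Ea2; rewrite -Ea2 in Et.
by rewrite -(inj_eq (@inl_inj TA TB)) -in_set1 -Et !inE.
Qed.

Lemma uncrossed_left_path3 (G : rel TA) v : inl v \in lefts :\: crossed ->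
  (forall t y, inl t \in lefts :\: crossed -> G t y = F (inl t) (inl y)) ->
  exists u w z, path3 G u w z /\ v \in [set u; w; z].
Proof.
move=> vD GF; have [u [w [z [P C]]]] := lambda_factor_path3 eirr FL (inl_in_domain v).
apply: (path3_pullback (@inl_inj TA TB) P C) => [t|t y].
  by rewrite inE => /(uncrossed_left_closed vD) /setDP[]; rewrite inE => /codom_inl.
by rewrite inE => /(uncrossed_left_closed vD); apply: GF.
Qed.

Definition bridged p q :=
  [|| F (inl p) (inl q), (p == a1) && (q == a2) | (p == a2) && (q == a1)].

Lemma bridged_path3 a' : a' != a1 -> a' != a2 -> F (inl a') (inl a1) ->
  (forall y, F (inl a1) (inl y) -> y = a') -> (forall y, F (inl a') (inl y) -> y = a1) ->
  (forall y, ~~ F (inl a2) (inl y)) -> path3 bridged a' a1 a2.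
Proof.
move=> a'a1 a'a2 Fa'a1 nb1 nba' nb2; have a21 : a2 != a1 by rewrite eq_sym.
split; rewrite /bridged ?eqxx ?orbT ?(negbTE a'a1) ?(negbTE a'a2) ?andbF ?orbF //.
- by rewrite a12.
- by apply/negP => /nba' E; move: a12; rewrite E eqxx.
move=> y; split; rewrite ?(negbTE a12) ?(negbTE a21) ?andbF ?orbF //.
- by move=> /nba'.
- by case/orP=> [/nb1|/andP[_ /eqP]]; auto.
- by rewrite (negbTE (nb2 y)) => /andP[_ /eqP].
Qed.

Lemma left_factor_of_crossed (eA : rel TA) :
  (forall p q, e (inl p) (inl q) -> eA p q) -> symmetric eA -> eA a1 a2 ->
  cross1 -> cross2 -> #|left_part (inl a1)| = 2 -> #|left_part (inl a2)| = 1 ->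
  exists FA, is_Lambda_factor eA [set: TA] FA /\ FA a1 a2.
Proof.
move=> e_left eAsym eA12 c1 c2 n1 n2.
have [a' [a'a1 a'a2 Fa'a1 C1]] := crossed_component_pair c1 c2 n1.
have C2 := crossed_component_single n2.
have nb1 y : F (inl a1) (inl y) -> y = a'.
  move=> Fy; move: (component_edge Fy); rewrite C1 => /orP[]/eqP // E.
  by subst y; rewrite Firr in Fy.
have nba' y : F (inl a') (inl y) -> y = a1.
  move=> Fy; move: (component_edge Fy).
  rewrite (@component_eq _ _ Fsym (inl a1) (inl a')) ?C1 ?eqxx ?orbT // => /orP[]/eqP // E.
  by subst y; rewrite Firr in Fy.
have nb2 y : ~~ F (inl a2) (inl y).
  by apply/negP => Fy; move: (component_edge Fy); rewrite C2 => /eqP E; subst y; rewrite Firr in Fy.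
have P3 := bridged_path3 a'a1 a'a2 Fa'a1 nb1 nba' nb2.
exists bridged; split; last by rewrite /bridged !eqxx orbT.
apply: lambda_factor_of_path3 => [p q|p q|v _].
- by rewrite /bridged Fsym; congr orb; rewrite orbC !(andbC (q == _)).
- case/or3P=> [/(lambda_factor_sub FL)/and3P[/e_left-> _ _]|
               /andP[/eqP-> /eqP->]|/andP[/eqP-> /eqP->]];
  by rewrite !inE ?andbT // eAsym.
have [|vM] := boolP (v \in [:: a'; a1; a2]).
  by move=> vin; exists a', a1, a2; split=> //; move: vin; rewrite !inE orbA.
have vD : inl v \in lefts :\: crossed.
  rewrite !inE !negb_or in vM; case/and3P: vM => va' va1 va2.
  have : inl v \notin component F (inl a1) by rewrite C1 negb_or va1.
  have : inl v \notin component F (inl a2) by rewrite C2.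
  by rewrite !inE /= c1 c2 => /negbTE-> /negbTE->.
apply: (uncrossed_left_path3 vD) => t y /setDP[_ tM].
have ta1 : t != a1 by apply: contraNneq tM => ->; rewrite !inE c1 connect0.
have ta2 : t != a2 by apply: contraNneq tM => ->; rewrite !inE c2 connect0 orbT.
by rewrite /bridged (negbTE ta1) (negbTE ta2) orbF.
Qed.

End JoinFactor.

Theorem mainTheorem11 (TA TB : finType) (eA : rel TA) (eB : rel TB)
  (a1 a2 : TA) (b1 b2 : TB) (x : TB) :
  simple_graph eA -> simple_graph eB -> cubic eA -> cubic eB ->
  #|TA| %% 6 = 0 -> #|TB| %% 6 = 4 ->
  eA a1 a2 -> eB b1 b2 ->
  ~ (exists F, is_Lambda_factor eA [set: TA] F /\ F a1 a2) ->
  ~ (exists F, is_Lambda_factor eB [set~ x] F /\ ~~ F b1 b2) ->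
  #|{: TA + TB}| %% 6 = 4 /\
  ~ (exists F, is_Lambda_factor (join_graph eA eB a1 a2 b1 b2) [set~ inr x] F).
Proof.
move=> [Asym Airr] [_ Birr] _ _ hA hB eA12 eB12 noA noB.
split; first by rewrite card_sum; lia.
move=> [F FL]; set e := join_graph _ _ _ _ _ _ in FL.
have eirr : irreflexive e by case=> ?; rewrite /e /join_graph ?Airr ?Birr.
have e_left p q : e (inl p) (inl q) -> eA p q by case/andP.
have e_right p q : e (inr p) (inr q) -> eB p q by case/andP.
have e_cross p q : e (inl p) (inr q) -> ((p == a1) && (q == b1)) || ((p == a2) && (q == b2)) by [].
have e_b12 : ~~ e (inr b1) (inr b2) by rewrite /e /join_graph !eqxx andbF.
have e_cross21 p q : e (inl p) (inr q) -> ((p == a2) && (q == b2)) || ((p == a1) && (q == b1)).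
  by rewrite orbC; apply: e_cross.
have a12 : a1 != a2 by apply: contraTneq eA12 => ->; rewrite Airr.
have b12 : b1 != b2 by apply: contraTneq eB12 => ->; rewrite Birr.
have a21 : a2 != a1 by rewrite eq_sym.
have b21 : b2 != b1 by rewrite eq_sym.
have h3 : 3 %| #|TA| by lia.
case: (crossing_cases eirr e_cross a12 b12 FL h3) => // [[c1 c2]|[c1 c2 n1 n2]|[c1 c2 n1 n2]].
- by apply: noB; apply: (right_factor_of_uncrossed eirr e_cross FL e_right e_b12 c1 c2).
- by apply: noA; apply: (left_factor_of_crossed eirr e_cross a12 b12 FL e_left Asym eA12).
- have eA21 : eA a2 a1 by rewrite Asym.
  have [FA [FAL FA21]] :=
    left_factor_of_crossed eirr e_cross21 a21 b21 FL e_left Asym eA21 c2 c1 n2 n1.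
  by apply: noA; exists FA; split=> //; case: FAL => FAsym _; rewrite FAsym.
Qed.
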